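(* Define $X:\Delta^{\mathrm{re}}\to\mathrm{End}(\mathfrak h^* )$ by $$X(\alpha):=-\alpha\,(\alpha|\cdot)+\tfrac12\,\mathrm{id}_{\mathfrak h^*},\qquad\text{i.e. } X(\alpha)(x)=-(\alpha|x)\alpha+\tfrac12x.$$ Then for all real roots $\alpha,\beta$: $X(\alpha)X(\beta)-X(\beta)X(\alpha)=0$ if $(\alpha|\beta)=0$, and $X(\alpha)X(\beta)+X(\beta)X(\alpha)=X(\alpha\pm\beta)$ if $(\alpha|\beta)=\mp1$. Consequently the assignment $X_i\mapsto X(\alpha_i)\otimes\Gamma(\alpha_i)\in\mathrm{End}(\mathfrak h^*\otimes S)$ extends to a representation $\sigma$ of $\mathfrak k$.
   Context: Let $A=(a_{ij})_{1\le i,j\le n}$ be a symmetrizable simply laced generalized Cartan matrix (off-diagonal entries $0$ or $-1$); the Dynkin diagram has an edge between $i\ne j$ iff $a_{ij}=-1$. Let $\mathfrak g$ be the split real Kac–Moody algebra of $A$ with Chevalley generators $e_i,f_i$, Cartan subalgebra $\mathfrak h$ (from a real realization), simple roots $\alpha_1,\dots,\alpha_n\in\mathfrak h^*$, set of real roots $\Delta^{\mathrm{re}}$, and let $(\cdot|\cdot)$ be the nondegenerate invariant symmetric bilinear form induced on $\mathfrak h^*$, with $(\alpha_i|\alpha_j)=a_{ij}$ (so $(\alpha|\alpha)=2$ for real roots). Let $\mathfrak k$ be the fixed-point subalgebra of the Chevalley involution ($e_i\mapsto -f_i$, $f_i\mapsto-e_i$, $h\mapsto -h$), with Berman generators $X_i=e_i-f_i$;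 $\mathfrak k$ is presented by generators $X_1,\dots,X_n$ and relations $[X_i,[X_i,X_j]]=-X_j$ if $a_{ij}=-1$, $[X_i,X_j]=0$ if $a_{ij}=0$. A generalized spin representation is a representation $\rho$ of $\mathfrak k$ with $\rho(X_i)^2=-\frac14\mathrm{id}$. Fix a finite-dimensional real vector space $S$ with positive definite inner product and orthonormal basis, and a generalized spin representation $\rho:\mathfrak k\to\mathrm{End}(S)$ whose values $\rho(X_i)$ are anti-symmetric real matrices in this basis (such exist, e.g. by realifying the generalized spin representations with compact image of Hainke–Köhl–Levy); put $\Gamma(\alpha_i):=2\rho(X_i)$. *)

From HB Require Import structures.
From mathcomp Require Import all_boot all_order all_algebra.
From mathcomp Require Export mxtens.
From mathcomp Require Import reals.
Set Implicit Arguments. Unset Strict Implicit. Unset Printing Implicit Defensive.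
Import Order.TTheory GRing.Theory Num.Theory.
Local Open Scope ring_scope.

Definition simply_laced_GCM (n : nat) (A : 'M[int]_n) : Prop :=
  (forall i, A i i = 2%:Z) /\
  (forall i j, i != j -> A i j = 0 \/ A i j = -1) /\
  (forall i j, A i j = 0 <-> A j i = 0).

(* h^* is modelled as column vectors 'cV[R]_m; the invariant form is
   (x|y) = x^T G y for a symmetric invertible matrix G. *)
Definition bform (R : pzRingType) (m : nat) (G : 'M[R]_m) (x y : 'cV[R]_m) : R :=
  (x^T *m G *m y) 0 0.

Definition rootmx (R : pzRingType) (m n : nat) (alpha : 'I_n -> 'cV[R]_m)
  : 'M[R]_(m, n) := \matrix_(k, i) alpha i k 0.

(* Simple reflection s_i(x) = x - (alpha_i | x) alpha_i  (since (alpha_i|alpha_i)=2). *)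
Definition sreflect (R : pzRingType) (m n : nat) (G : 'M[R]_m)
  (alpha : 'I_n -> 'cV[R]_m) (i : 'I_n) (x : 'cV[R]_m) : 'cV[R]_m :=
  x - bform G (alpha i) x *: alpha i.

Inductive real_root (R : pzRingType) (m n : nat) (G : 'M[R]_m)
  (alpha : 'I_n -> 'cV[R]_m) : 'cV[R]_m -> Prop :=
| real_root_simple i : real_root G alpha (alpha i)
| real_root_refl i x : real_root G alpha x -> real_root G alpha (sreflect G alpha i x).

Definition Xop (R : fieldType) (m : nat) (G : 'M[R]_m) (a : 'cV[R]_m) : 'M[R]_m :=
  (2%:R^-1)%:M - a *m (a^T *m G).

Definition mxcomm (R : pzRingType) (k : nat) (P Q : 'M[R]_k) : 'M[R]_k :=
  P *m Q - Q *m P.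

(* A family Y_i of endomorphisms of R^k satisfies the defining relations of
   the presentation of k (Berman generators); by the universal property of the
   presented Lie algebra k, this is exactly the statement that X_i |-> Y_i
   extends to a representation of k. *)
Definition krep_relations (R : pzRingType) (n k : nat) (A : 'M[int]_n)
  (Y : 'I_n -> 'M[R]_k) : Prop :=
  forall i j, i != j ->
    (A i j = -1 -> mxcomm (Y i) (mxcomm (Y i) (Y j)) = - Y j) /\
    (A i j = 0 -> mxcomm (Y i) (Y j) = 0).

Definition gen_spin_rep (R : fieldType) (n k : nat) (A : 'M[int]_n)
  (rho : 'I_n -> 'M[R]_k) : Prop :=
  krep_relations A rho /\ (forall i, rho i *m rho i = - (4%:R^-1)%:M).

Definition Gamma (R : pzRingType) (n k : nat) (rho : 'I_n -> 'M[R]_k) (i : 'I_n)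
  : 'M[R]_k := 2%:R *: rho i.

(* Writing dyad a b for the rank-one map x |-> (b|x) a, one has
   dyad a b * dyad c d = (b|c) dyad a d, hence
   X(a) X(b) = 1/4 - (dyad a a + dyad b b)/2 + (a|b) dyad a b.  The root
   relations are then linear identities among dyads, valid for all vectors a, b
   (real roots or not), in any field of characteristic other than 2.
   For the representation put Y_i = X(alpha_i) (x) Gamma_i.  As rho_i^2 = -1/4 is
   central, [rho_i, [rho_i, q]] rho_i = 1/2 [rho_i, q], so the Serre-type relation
   [rho_i, [rho_i, rho_j]] = -rho_j forces Gamma_i, Gamma_j to anticommute when
   a_ij = -1.  Then [Y_i, Y_j] = X(alpha_i + alpha_j) (x) Gamma_i Gamma_j, and as
   Gamma_i anticommutes with Gamma_i Gamma_j and (alpha_i | alpha_i + alpha_j) = 1,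
   [Y_i, [Y_i, Y_j]] = X(-alpha_j) (x) Gamma_i^2 Gamma_j = -Y_j. *)

From HB Require Import structures.
From mathcomp Require Import all_boot all_order all_algebra.
From mathcomp Require Import mxtens reals.
From mathcomp Require Import ring.
Set Implicit Arguments. Unset Strict Implicit.
Import Order.TTheory GRing.Theory Num.Theory.
Local Open Scope ring_scope.

Section RankOne.
Variables (R : comPzRingType) (m : nat) (G : 'M[R]_m).

Definition dyad (a b : 'cV[R]_m) : 'M[R]_m := a *m (b^T *m G).

Lemma dyad_mul a b c d : dyad a b *m dyad c d = bform G b c *: dyad a d.
Proof.
have -> : dyad a b *m dyad c d = a *m (b^T *m G *m c) *m (d^T *m G).
  by rewrite /dyad !mulmxA.
by rewrite [b^T *m G *m c]mx11_scalar mul_mx_scalar -scalemxAl.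
Qed.

Lemma dyadDl a b c : dyad (a + b) c = dyad a c + dyad b c.
Proof. exact: mulmxDl. Qed.

Lemma dyadDr a b c : dyad a (b + c) = dyad a b + dyad a c.
Proof. by rewrite /dyad linearD /= mulmxDl mulmxDr. Qed.

Lemma dyadNl a c : dyad (- a) c = - dyad a c.
Proof. exact: mulNmx. Qed.

Lemma dyadNr a c : dyad a (- c) = - dyad a c.
Proof. by rewrite /dyad linearN /= mulNmx mulmxN. Qed.

Lemma bformDr a b c : bform G a (b + c) = bform G a b + bform G a c.
Proof. by rewrite /bform mulmxDr mxE. Qed.

Lemma bformNr a c : bform G a (- c) = - bform G a c.
Proof. by rewrite /bform mulmxN mxE. Qed.

Hypothesis G_sym : G^T = G.

Lemma bformC a b : bform G a b = bform G b a.
Proof.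
have tr : (a^T *m G *m b)^T = b^T *m G *m a by rewrite !trmx_mul trmxK G_sym mulmxA.
by rewrite /bform -tr [in RHS]mxE.
Qed.

End RankOne.

Section RootOperators.
Variables (R : fieldType) (m : nat) (G : 'M[R]_m).
Hypotheses (G_sym : G^T = G) (two_neq0 : 2%:R != 0 :> R).

Local Notation X := (Xop G).
Local Notation h := (2%:R^-1 : R).

Lemma Xop_dyad a : X a = h%:M - dyad G a a.
Proof. by []. Qed.

Lemma XopN a : X (- a) = X a.
Proof. by rewrite !Xop_dyad dyadNl dyadNr opprK. Qed.

Lemma Xop_mul a b :
  X a *m X b = (h * h)%:M - h *: dyad G b b - h *: dyad G a a + bform G a b *: dyad G a b.
Proof.
rewrite !Xop_dyad mulmxBl !mulmxBr !mul_scalar_mx mul_mx_scalar dyad_mul.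
by apply/matrixP => i j; rewrite !mxE; ring.
Qed.

Lemma Xop_commute a b : bform G a b = 0 -> X a *m X b - X b *m X a = 0.
Proof.
move=> ab0; rewrite !Xop_mul [bform G b a]bformC // ab0 !scale0r !addr0.
by apply/matrixP => i j; rewrite !mxE; ring.
Qed.

Lemma Xop_anticommute a b : bform G a b = -1 -> X a *m X b + X b *m X a = X (a + b).
Proof.
move=> abN1; rewrite !Xop_mul [bform G b a]bformC // abN1 Xop_dyad !(dyadDl, dyadDr).
by apply/matrixP => i j; rewrite !mxE; field.
Qed.

Lemma Xop_anticommuteN a b : bform G a b = 1 -> X a *m X b + X b *m X a = X (a - b).
Proof.
by move=> ab1; rewrite -(XopN b) Xop_anticommute // bformNr ab1.
Qed.

End RootOperators.

Section SquareToScalar.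
Variables (R : fieldType) (N : nat) (c : R) (p : 'M[R]_N).
Hypothesis p_sq : p *m p = - c%:M.

Lemma double_mxcomm_mulmx q : mxcomm p (mxcomm p q) *m p = (2%:R * c) *: mxcomm p q.
Proof.
have pp_r M : M *m p *m p = - (c *: M) by rewrite -mulmxA p_sq mulmxN mul_mx_scalar.
rewrite /mxcomm !(mulmxBl, mulmxBr) !mulmxA !pp_r p_sq mulNmx mul_scalar_mx mulNmx -scalemxAl.
by apply/matrixP => i j; rewrite !mxE; ring.
Qed.

Lemma anticommute_of_double_mxcomm q : 2%:R * c != 0 ->
  mxcomm p (mxcomm p q) = - (4%:R * c) *: q -> p *m q = - (q *m p).
Proof.
move=> c2_neq0 dcomm; apply: (scalerI c2_neq0).
have := double_mxcomm_mulmx q; rewrite dcomm -scalemxAl /mxcomm.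
move: (p *m q) (q *m p) => P Q /matrixP PQ; apply/matrixP => i j.
move: (PQ i j); rewrite !mxE => PQ_ij.
have -> : 2%:R * c * P i j = 2%:R * c * (P i j - Q i j) + 2%:R * c * Q i j by ring.
by rewrite -PQ_ij; ring.
Qed.

End SquareToScalar.

Section TensorCommutators.
Variables (R : comPzRingType) (m N : nat).

Lemma tensmxDl p q r s (A B : 'M[R]_(p, q)) (C : 'M[R]_(r, s)) :
  (A + B) *t C = A *t C + B *t C.
Proof. by apply/matrixP => i j; rewrite !mxE mulrDl. Qed.

Lemma tensmxNr p q r s (A : 'M[R]_(p, q)) (C : 'M[R]_(r, s)) : A *t (- C) = - (A *t C).
Proof. by apply/matrixP => i j; rewrite !mxE mulrN. Qed.

Lemma mxcomm_tensmx_comm (P1 P2 : 'M[R]_m) (g1 g2 : 'M[R]_N) :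
  P1 *m P2 = P2 *m P1 -> g1 *m g2 = g2 *m g1 -> mxcomm (P1 *t g1) (P2 *t g2) = 0.
Proof. by move=> P12 g12; rewrite /mxcomm !tensmx_mul P12 g12 subrr. Qed.

Lemma mxcomm_tensmx_anticomm (P1 P2 : 'M[R]_m) (g1 g2 : 'M[R]_N) :
  g2 *m g1 = - (g1 *m g2) ->
  mxcomm (P1 *t g1) (P2 *t g2) = (P1 *m P2 + P2 *m P1) *t (g1 *m g2).
Proof. by move=> g21; rewrite /mxcomm !tensmx_mul g21 tensmxNr opprK tensmxDl. Qed.

Lemma double_mxcomm_tensmx (P Q Z : 'M[R]_m) (g h : 'M[R]_N) :
  g *m g = - 1%:M -> h *m g = - (g *m h) ->
  P *m Q + Q *m P = Z -> P *m Z + Z *m P = Q ->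
  mxcomm (P *t g) (mxcomm (P *t g) (Q *t h)) = - (Q *t h).
Proof.
move=> g_sq hg PQ PZ; rewrite mxcomm_tensmx_anticomm // PQ mxcomm_tensmx_anticomm.
  by rewrite PZ mulmxA g_sq mulNmx mul1mx tensmxNr.
by rewrite -mulmxA hg mulmxN mulmxA.
Qed.

End TensorCommutators.

Section SpinGammas.
Variables (R : fieldType) (n N : nat) (A : 'M[int]_n) (rho : 'I_n -> 'M[R]_N).
Hypotheses (two_neq0 : 2%:R != 0 :> R) (rho_spin : gen_spin_rep A rho).

Local Notation Gm := (Gamma rho).

Lemma four_neq0 : 4%:R != 0 :> R.
Proof. by rewrite (natrM R 2 2) mulf_neq0. Qed.

Lemma Gamma_mul i j : Gm i *m Gm j = 4%:R *: (rho i *m rho j).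
Proof. by rewrite /Gamma -scalemxAl -scalemxAr scalerA -natrM. Qed.

Lemma Gamma_sq i : Gm i *m Gm i = - 1%:M.
Proof. by rewrite Gamma_mul rho_spin.2 scalerN scale_scalar_mx mulfV ?four_neq0. Qed.

Lemma Gamma_commute i j : i != j -> A i j = 0 -> Gm i *m Gm j = Gm j *m Gm i.
Proof.
move=> ij Aij; have /subr0_eq rij := (rho_spin.1 i j ij).2 Aij.
by rewrite !Gamma_mul rij.
Qed.

Lemma Gamma_anticommute i j : i != j -> A i j = -1 -> Gm j *m Gm i = - (Gm i *m Gm j).
Proof.
move=> ij Aij; rewrite !Gamma_mul -scalerN.
rewrite (@anticommute_of_double_mxcomm _ _ 4%:R^-1 (rho i)) ?opprK ?rho_spin.2 //.
  by rewrite mulf_neq0 ?invr_neq0 ?four_neq0.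
by rewrite mulfV ?four_neq0 // scaleN1r (rho_spin.1 i j ij).1.
Qed.

End SpinGammas.

Theorem proposition5p3 (R : realType) (n m N : nat) (A : 'M[int]_n)
  (G : 'M[R]_m) (alpha : 'I_n -> 'cV[R]_m) (rho : 'I_n -> 'M[R]_N) :
  simply_laced_GCM A ->
  G^T = G -> G \in unitmx ->
  (forall i j, bform G (alpha i) (alpha j) = (A i j)%:~R) ->
  \rank (rootmx alpha) = n ->
  m = (2 * n - \rank (map_mx intr A : 'M[R]_n))%N ->
  gen_spin_rep A rho ->
  (forall i, (rho i)^T = - rho i) ->
  (forall a b, real_root G alpha a -> real_root G alpha b ->
     (bform G a b = 0 -> Xop G a *m Xop G b - Xop G b *m Xop G a = 0) /\
     (bform G a b = -1 -> Xop G a *m Xop G b + Xop G b *m Xop G a = Xop G (a + b)) /\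
     (bform G a b = 1 -> Xop G a *m Xop G b + Xop G b *m Xop G a = Xop G (a - b)))
  /\ krep_relations A (fun i => Xop G (alpha i) *t Gamma rho i).
Proof.
move=> [A_diag _] G_sym _ alpha_form _ _ rho_spin _.
have two_neq0 : 2%:R != 0 :> R by rewrite pnatr_eq0.
split=> [a b _ _ | i j ij].
  split; [exact: Xop_commute | split; [exact: Xop_anticommute | exact: Xop_anticommuteN]].
split=> Aij.
- have ij_form : bform G (alpha i) (alpha j) = -1 by rewrite alpha_form Aij.
  have i_ij_form : bform G (alpha i) (alpha i + alpha j) = 1.
    by rewrite bformDr ij_form !alpha_form A_diag; ring.
  apply: (double_mxcomm_tensmx (Z := Xop G (alpha i + alpha j))).
  + exact: Gamma_sq two_neq0 rho_spin i.
  + exact (Gamma_anticommute two_neq0 rho_spin ij Aij).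
  + exact: Xop_anticommute.
  + by rewrite Xop_anticommuteN // opprD addrA subrr add0r XopN.
- apply: mxcomm_tensmx_comm; last exact (Gamma_commute rho_spin ij Aij).
  by apply/eqP; rewrite -subr_eq0 Xop_commute ?alpha_form ?Aij.
Qed.
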